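(* Let $\mathcal{G}=(V,E)$ be a DAG and let $x,y\in V$ and $K\subseteq V$ be such that $K$ does not $d$-separate $x$ and $y$. Then there exists a path $p$ from $x$ to $y$ such that (i) no non-collider on $p$ is in $K$, (ii) for every collider $n_i$ on $p$ there exists a directed path $q_i$ from $n_i$ to some $k_i\in K$ (possibly of length zero, $n_i=k_i$), (iii) each $q_i$ intersects $p$ only at $n_i$, and (iv) the paths $q_i$ are pairwise node-disjoint.
   Context: A path in a DAG is a sequence of distinct nodes in which consecutive nodes are adjacent; a node $k$ on a path is a collider if the path has consecutive edges $u\to k\leftarrow w$, and a non-collider otherwise. A directed path is one all of whose edges point in the same direction along the path. $d$-separation: $K$ $d$-separates $x$ and $y$ if every path between them contains a non-collider in $K$ or a collider that is not in $K$ and has no descendant in $K$. *)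

From mathcomp Require Import all_boot.
Set Implicit Arguments. Unset Strict Implicit. Unset Printing Implicit Defensive.

Section DAG.
Variables (T : finType) (E : rel T).

Definition adj : rel T := fun u v => E u v || E v u.

Definition is_dag : Prop :=
  forall (x : T) (p : seq T), path E x p -> last x p = x -> p = [::].

Definition is_gpath (x : T) (p : seq T) (y : T) : bool :=
  [&& path adj x p, uniq (x :: p) & last x p == y].

Definition is_dpath (x : T) (q : seq T) : bool := path E x q && uniq (x :: q).

Definition collider (s : seq T) (k : T) : bool :=
  [exists i : 'I_(size s),
    [&& 0 < (i : nat), (i : nat).+1 < size s, nth k s i == k,
        E (nth k s (i : nat).-1) k & E (nth k s (i : nat).+1) k]].

Definition noncollider (s : seq T) (k : T) : bool := (k \in s) && ~~ collider s k.

(* d-separation as in the paper; descendants include the node itself *)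
Definition d_separates (K : {set T}) (x y : T) : Prop :=
  forall p : seq T, is_gpath x p y ->
    exists k, (noncollider (x :: p) k && (k \in K)) \/
              [/\ collider (x :: p) k, k \notin K &
                  forall z, z \in K -> ~~ connect E k z].
End DAG.

(* Choose a d-connecting path together with, for every collider c, a witness
   q c: a directed path from c into K whose nodes before its end avoid K.
   Among all such configurations with the given endpoints take one of minimal
   weight (length of the path plus total length of the witnesses).  If the
   witness of a collider c meets the path at z, shortcut the path from c along
   the witness to z; if the witnesses of two colliders c and c' meet at z, go
   from c down to z and back up to c'.  Either way c, c' and the new nodes
   become non-colliders outside K, z becomes at most a collider witnessed by
   the rest of its witness, and the weight drops.  Hence a configuration of
   minimal weight also satisfies (iii) and (iv). *)

From Stdlib Require Import Classical.
From mathcomp Require Import all_boot zify.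
Set Implicit Arguments. Unset Strict Implicit. Unset Printing Implicit Defensive.

Section Sequences.
Variable T : eqType.
Implicit Types (a b c d z : T) (r s u v w : seq T).

Lemma head_rev d s : head d (rev s) = last d s.
Proof. by case/lastP: s => [|s y]; rewrite ?rev_rcons ?last_rcons. Qed.

Lemma last_rev d s : last d (rev s) = head d s.
Proof. by case: s => [|y s]; rewrite ?rev_cons ?last_rcons. Qed.

Lemma path_rcons_head (e : rel T) c r z : path e c (rcons r z) -> e c (head z r).
Proof. by case: r => [|y r] /= /andP[]. Qed.

Lemma mem_split z s : z \in s -> exists r1 r2, s = r1 ++ z :: r2.
Proof. by case/splitPr=> r1 r2; exists r1, r2. Qed.

Lemma has_split (P : pred T) s :
  has P s -> exists r1 z r2, [/\ s = r1 ++ z :: r2, P z & ~~ has P r1].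
Proof. by case/split_find=> z r1 r2 Pz r1P; exists r1, z, r2; rewrite cat_rcons. Qed.

Lemma split_two a b s : a \in s -> b \in s -> a != b ->
  (exists u v w, s = u ++ a :: v ++ b :: w) \/ (exists u v w, s = u ++ b :: v ++ a :: w).
Proof.
move=> /splitPr[u w] + ab; rewrite mem_cat in_cons eq_sym (negbTE ab) /=.
by case/orP=> /splitPr[v w']; [right; exists v, w', w; rewrite -catA | left; exists u, v, w'].
Qed.

End Sequences.

Section Triples.
Variable T : eqType.
Implicit Types (a b c d : T) (s u v w : seq T).

Fixpoint triples s : seq (T * T * T) :=
  if s is a :: ((b :: c :: _) as s') then (a, b, c) :: triples s' else [::].

Lemma triplesP a b c s :
  reflect (exists s1 s2, s = s1 ++ [:: a, b, c & s2]) ((a, b, c) \in triples s).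
Proof.
apply: (iffP idP) => [|[s1 [s2 ->]]].
  elim: s => [|x [|y [|z s]] IHs] //=.
  rewrite in_cons => /orP[/eqP[-> -> ->]|/IHs[s1 [s2 ->]]]; first by exists [::], s.
  by exists (x :: s1), s2.
elim: s1 => [|x s1 IHs1] /=; first exact: mem_head.
by case: s1 IHs1 => [|y [|z s1]] /= IHs1; rewrite in_cons IHs1 orbT.
Qed.

Lemma triples_catl s1 s2 : {subset triples s1 <= triples (s1 ++ s2)}.
Proof.
move=> [[a b] c] /triplesP[u [w ->]]; apply/triplesP.
by exists u, (w ++ s2); rewrite -catA.
Qed.

Lemma triples_catr s1 s2 : {subset triples s2 <= triples (s1 ++ s2)}.
Proof.
move=> [[a b] c] /triplesP[u [w ->]]; apply/triplesP.
by exists (s1 ++ u), w; rewrite catA.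
Qed.

Lemma mem_triples_cat t u b w :
  (t \in triples (u ++ b :: w)) =
  [|| t \in triples (rcons u b),
      [&& u != [::], w != [::] & t == (last b u, b, head b w)]
    | t \in triples (b :: w)].
Proof.
elim: u => [|a [|a' [|a'' u]] IHu] /=; first by case: w.
- by case: w IHu => [|c w] _ //=; rewrite in_cons.
- by rewrite in_cons IHu; case: w IHu => [|c w] _ //=; rewrite ?in_cons ?orbF.
- by rewrite in_cons IHu in_cons !orbA.
Qed.

Lemma triples_at u b w :
  u != [::] -> w != [::] -> (last b u, b, head b w) \in triples (u ++ b :: w).
Proof. by move=> u0 w0; rewrite mem_triples_cat u0 w0 eqxx orbT. Qed.

Lemma triples_rev a b c s : ((a, b, c) \in triples (rev s)) = ((c, b, a) \in triples s).
Proof.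
apply/triplesP/triplesP => -[s1 [s2 def_s]]; exists (rev s2), (rev s1).
  by rewrite -[s]revK def_s rev_cat /= !rev_cons -!cats1 -!catA.
by rewrite def_s rev_cat /= !rev_cons -!cats1 -!catA.
Qed.

Lemma triples_sorted (e : rel T) a b c s :
  sorted e s -> (a, b, c) \in triples s -> e a b && e b c.
Proof.
move=> + /triplesP[s1 [s2 def_s]]; rewrite def_s sorted_cat_cons /=.
by case/and3P=> _ -> /andP[->].
Qed.

Lemma triples_mid a b c x s : (a, b, c) \in triples (x :: s) -> b \in s.
Proof.
case/triplesP=> [[|y s1] [s2 [_ ->]]]; first exact: mem_head.
by rewrite mem_cat !in_cons eqxx !orbT.
Qed.

Lemma triples_mid_rcons a b c s y : (a, b, c) \in triples (rcons s y) -> b \in s.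
Proof. by rewrite -[rcons s y]revK triples_rev rev_rcons => /triples_mid; rewrite mem_rev. Qed.

Lemma triples_uniq_mid a b c a' c' s :
  uniq s -> (a, b, c) \in triples s -> (a', b, c') \in triples s -> a = a' /\ c = c'.
Proof.
move=> Us /triplesP[s1 [s2 def_s]] /triplesP[t1 [t2 def_t]].
have idx_b s0 s3 x y : s = s0 ++ [:: x, b, y & s3] -> index b s = (size s0).+1.
  move=> def; have : b \notin rcons s0 x.
    move: Us; rewrite def -cat_rcons cat_uniq => /and3P[_ /hasPn/(_ b) + _].
    by rewrite mem_head => /implyP.
  by rewrite def -cat_rcons index_cat => /negbTE->; rewrite /= eqxx size_rcons addn0.
have := idx_b _ _ _ _ def_s; rewrite (idx_b _ _ _ _ def_t) => -[eq_size].
move: def_t; rewrite def_s => /(congr1 (drop (size s1))).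
by rewrite drop_size_cat // -eq_size drop_size_cat // => -[-> -> _].
Qed.

Lemma triples_nth d s i :
  0 < i -> i.+1 < size s -> (nth d s i.-1, nth d s i, nth d s i.+1) \in triples s.
Proof.
elim: s i => [|a s IHs] [|[|i]] //= _.
  by case: s {IHs} => [|b [|c s]] //= _; rewrite mem_head.
by move=> lt_i; apply: (triples_catr [:: a]); apply: (IHs i.+1).
Qed.

Lemma triples_inner x p b :
  b \in x :: p -> b != x -> b != last x p -> exists a c, (a, b, c) \in triples (x :: p).
Proof.
case/mem_split=> u [w def_s] bx bl; rewrite def_s.
exists (last b u), (head b w); apply: triples_at.
  by apply: contraNneq bx => u0; move: def_s; rewrite u0 => -[->].
apply: contraNneq bl => w0.
by rewrite -[last x p]/(last x (x :: p)) def_s last_cat w0.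
Qed.
End Triples.

Section DAG.
Variables (T : finType) (E : rel T) (K : {set T}).
Hypothesis dag : is_dag E.
Implicit Types (a b c d e z : T) (l r s u v w : seq T) (q : T -> seq T).

Lemma dag_asym a b : E a b -> ~~ E b a.
Proof.
move=> ab; apply/negP=> ba.
by have := @dag a [:: b; a]; rewrite /= ab ba => /(_ isT erefl).
Qed.

Lemma dpath_uniq c s : path E c s -> uniq (c :: s).
Proof.
elim: s c => [|d s IHs] c // /[dup] cs /andP[_ /IHs ds].
rewrite cons_uniq ds andbT; apply/negP; move: cs.
move: (d :: s) => t cs ct; case/splitPr: ct cs => u w.
rewrite cat_path => /andP[cu /andP[uc _]].
have := @dag c (rcons u c); rewrite rcons_path cu uc last_rcons => /(_ isT erefl).
by case: u {cu uc}.
Qed.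

Lemma path_adj c s : path E c s -> path (adj E) c s.
Proof. by apply: sub_path => a b ab; rewrite /adj ab. Qed.

Lemma path_adj_rev c r z : path E c (rcons r z) -> path (adj E) z (rcons (rev r) c).
Proof.
move=> crz; have := rev_path (adj E) c (rcons r z).
rewrite last_rcons belast_rcons rev_cons => ->.
by apply: sub_path crz => a b ab; rewrite /adj ab orbT.
Qed.

Lemma colliderP s k :
  reflect (exists a b, [/\ (a, k, b) \in triples s, E a k & E b k]) (collider E s k).
Proof.
apply: (iffP existsP) => [[i /and5P[i0 i1 /eqP ik Eak Ebk]]|].
  exists (nth k s i.-1), (nth k s i.+1); split=> //.
  by have := triples_nth k i0 i1; rewrite ik.
case=> a [b [/triplesP[s1 [s2 ->]] Eak Ebk]]; set t := [:: a, k, b & s2].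
have nth_t j : nth k (s1 ++ t) (size s1 + j) = nth k t j.
  by rewrite nth_cat ltnNge leq_addr /= addKn.
have lt_i : size s1 + 1 < size (s1 ++ t) by rewrite size_cat /= ltn_add2l.
exists (Ordinal lt_i) => /=.
have -> : (size s1 + 1).-1 = size s1 + 0 by rewrite addn1 addn0.
have -> : (size s1 + 1).+1 = size s1 + 2 by rewrite addn1 addn2.
by rewrite !nth_t /= Eak Ebk eqxx addn1 size_cat ltn_add2l.
Qed.

Lemma collider_mem s c : collider E s c -> c \in s.
Proof.
by case/colliderP=> a [b [/triplesP[s1 [s2 ->]] _ _]]; rewrite mem_cat !in_cons eqxx !orbT.
Qed.

Lemma noncollider_ends x p : uniq (x :: p) ->
  noncollider E (x :: p) x /\ noncollider E (x :: p) (last x p).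
Proof.
move=> Us; rewrite /noncollider mem_head mem_last /=; split; apply/colliderP=> -[a [b [abe _ _]]].
  by move: Us (triples_mid abe) => /= /andP[/negP].
move: Us abe; rewrite lastI rcons_uniq => /andP[/negP lK _] /triples_mid_rcons.
exact: lK.
Qed.

(* Avoiding K before the end lets the witness nodes become non-colliders when
   the path is rerouted through them. *)
Definition dpath_to_K c l :=
  [&& path E c l, last c l \in K & all [predC K] (belast c l)].

Lemma dpath_to_K_cat c r1 z r2 :
  dpath_to_K c (r1 ++ z :: r2) ->
  [/\ path E c (rcons r1 z), all [predC K] (c :: r1) & dpath_to_K z r2].
Proof.
have belast_cat_cons d : belast d (r1 ++ z :: r2) = d :: r1 ++ belast z r2.
  by elim: r1 d => [|y r1 IHr1] d //=; rewrite IHr1.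
rewrite /dpath_to_K belast_cat_cons -cat_cons all_cat last_cat cat_path rcons_path /=.
by case/and3P=> /andP[-> /andP[-> ->]] -> /andP[-> ->].
Qed.

Lemma exists_dpath_to_K c z : connect E c z -> z \in K -> exists l, dpath_to_K c l.
Proof.
case/connectP=> l + ->; elim: l c => [|d l IHl] c.
  by exists [::]; rewrite /dpath_to_K /= andbT.
case/andP=> cd /IHl{}IHl /IHl[l' dl'].
case cK: (c \in K); first by exists [::]; rewrite /dpath_to_K /= cK.
by exists (d :: l'); move: dl'; rewrite /dpath_to_K /= cd cK.
Qed.

(* Conditions (i) and (ii) at an inner node b with neighbours a and e on the
   path, l being the witness of b. *)
Definition triple_ok l a b e :=
  if E a b && E e b then dpath_to_K b l else b \notin K.

Lemma triple_ok_sym l a b e : triple_ok l a b e = triple_ok l e b a.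
Proof. by rewrite /triple_ok andbC. Qed.

Lemma triple_ok_chain l a b e : E b e -> b \notin K -> triple_ok l a b e.
Proof. by move=> /dag_asym be bK; rewrite /triple_ok (negbTE be) andbF. Qed.

Lemma triple_ok_collider l a b e : E a b -> E e b -> dpath_to_K b l -> triple_ok l a b e.
Proof. by rewrite /triple_ok => -> ->. Qed.

Lemma triple_ok_redirect l l' a a' b e :
  triple_ok l a b e -> E a' b -> dpath_to_K b l' -> triple_ok l' a' b e.
Proof.
by rewrite /triple_ok => + -> bl'; case: (E e b) => [|]; rewrite ?andbF.
Qed.

Lemma triple_ok_dpath c r1 z r2 l a b e :
  dpath_to_K c (r1 ++ z :: r2) -> (a, b, e) \in triples (c :: rcons r1 z) ->
  triple_ok l a b e.
Proof.
case/dpath_to_K_cat=> czs /allP cr1K _ abe.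
have /andP[_ be] := @triples_sorted _ E _ _ _ (c :: rcons r1 z) czs abe.
exact: triple_ok_chain be (cr1K b (@triples_mid_rcons _ a b e (c :: r1) z abe)).
Qed.

Lemma triple_ok_dpath_rev c r1 z r2 l a b e :
  dpath_to_K c (r1 ++ z :: r2) -> (a, b, e) \in triples (z :: rcons (rev r1) c) ->
  triple_ok l a b e.
Proof.
have -> : z :: rcons (rev r1) c = rev (c :: rcons r1 z) by rewrite rev_cons rev_rcons.
move=> cz; rewrite triples_rev triple_ok_sym.
exact: triple_ok_dpath cz.
Qed.

End DAG.

Section Configurations.
Variables (T : finType) (E : rel T) (K : {set T}).
Implicit Types (a b c d e z : T) (l r s u v w : seq T) (q : T -> seq T).

Definition admissible x p q :=
  [/\ path (adj E) x p, uniq (x :: p), x \notin K, last x p \notin K &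
      forall a b e, (a, b, e) \in triples (x :: p) -> triple_ok E K (q b) a b e].

Definition weight s q := size s + \sum_(b <- s) size (q b).

Definition improvable x p q :=
  exists p' q', [/\ admissible x p' q', last x p' = last x p &
                    weight (x :: p') q' < weight (x :: p) q].

(* The nodes of a bridge spliced into the path become non-colliders, except z,
   which keeps the rest r of the witness through which it was reached. *)
Definition reroute q (bridge : seq T) z r b :=
  if b == z then r else if b \in bridge then [::] else q b.

Lemma reroute_at q (bridge : seq T) z r : reroute q bridge z r z = r.
Proof. by rewrite /reroute eqxx. Qed.

Lemma weight_cat s1 s2 q : weight (s1 ++ s2) q = weight s1 q + weight s2 q.
Proof. by rewrite /weight size_cat big_cat /=; lia. Qed.

Lemma eq_in_weight s q q' : {in s, q' =1 q} -> weight s q' = weight s q.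
Proof. by move=> qq'; rewrite /weight (eq_big_seq _ (fun b sb => congr1 size (qq' b sb))). Qed.

Lemma weight_ends c v d q : size (q c) + size (q d) + 2 <= weight (c :: rcons v d) q.
Proof. by rewrite /weight big_cons big_rcons /= size_rcons; lia. Qed.

Lemma weight_reroute q (bridge : seq T) z r :
  uniq bridge -> z \in bridge -> weight bridge (reroute q bridge z r) = size bridge + size r.
Proof.
move=> Ub zb; rewrite /weight (bigD1_seq z) //= /reroute eqxx big1_seq ?addn0 //.
by move=> b /andP[/negbTE-> ->].
Qed.

Definition disjoint_witnesses s q :=
  (forall c, collider E s c -> [disjoint q c & s]) /\
  (forall c c', collider E s c -> collider E s c' -> c != c' ->
     [disjoint c :: q c & c' :: q c']).

Lemma admissible_collider x p q c :
  admissible x p q -> collider E (x :: p) c -> dpath_to_K E K c (q c).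
Proof.
move=> [_ _ _ _ ok_s] /colliderP[a [b [abc Eac Ebc]]].
by move: (ok_s _ _ _ abc); rewrite /triple_ok Eac Ebc.
Qed.

Lemma admissible_noncollider x p q k :
  admissible x p q -> noncollider E (x :: p) k -> k \notin K.
Proof.
case=> _ _ xK lK ok_s /andP[ks not_col].
have [->|kx] := eqVneq k x; first exact: xK.
have [->|kl] := eqVneq k (last x p); first exact: lK.
have [a [b abk]] := triples_inner ks kx kl.
move: (ok_s _ _ _ abk); rewrite /triple_ok; case: ifP => // /andP[Eak Ebk].
by case/negP: not_col; apply/colliderP; exists a, b.
Qed.

Lemma admissibleI x p q :
  path (adj E) x p -> uniq (x :: p) ->
  (forall k, noncollider E (x :: p) k -> k \notin K) ->
  (forall c, collider E (x :: p) c -> dpath_to_K E K c (q c)) ->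
  admissible x p q.
Proof.
move=> xp Us nc_K col_ok; have [nc_x nc_l] := noncollider_ends E Us.
split=> //; [exact: nc_K nc_x | exact: nc_K nc_l | move=> a b e abe].
rewrite /triple_ok; case: ifP => [/andP[Eab Eeb]|not_col].
  by apply: col_ok; apply/colliderP; exists a, e.
apply: nc_K; rewrite /noncollider in_cons (triples_mid abe) orbT /=.
apply/colliderP=> -[a' [e' [a'be' Ea'b Ee'b]]].
have [ea ee] := triples_uniq_mid Us abe a'be'; subst a' e'.
by rewrite Ea'b Ee'b in not_col.
Qed.

End Configurations.

Section Splice.
Variables (T : finType) (E : rel T) (K : {set T}).
Variables (x : T) (p : seq T) (q : T -> seq T).
Variables (u v w m r : seq T) (c d z : T).

Let bridge := c :: rcons m d.
Let q' := reroute q bridge z r.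
Let s' := u ++ c :: m ++ d :: w.

Hypothesis adm : admissible E K x p q.
Hypothesis def_s : x :: p = u ++ c :: v ++ d :: w.
Hypothesis bridge_path : path (adj E) c (rcons m d).
Hypothesis m_uniq : uniq m.
Hypothesis m_fresh : [disjoint m & x :: p].
Hypothesis z_bridge : z \in bridge.
Hypothesis junction_c : u != [::] -> triple_ok E K (q' c) (last c u) c (head d m).
Hypothesis junction_d : w != [::] -> triple_ok E K (q' d) (last c m) d (head d w).
Hypothesis bridge_ok :
  forall a b e, (a, b, e) \in triples bridge -> triple_ok E K (q' b) a b e.
Hypothesis lighter : size m + size r < size (q c) + size (q d).

Lemma splice_bridge : s' = u ++ bridge ++ w.
Proof. by rewrite /s' /bridge /= cat_rcons. Qed.

Lemma splice_head : x :: behead s' = s'.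
Proof. by move: def_s; rewrite /s'; case: u => [|y u'] [->]. Qed.

Lemma splice_last : last x (behead s') = last x p.
Proof.
have -> : last x p = last x (x :: p) by [].
by rewrite -[LHS]/(last x (x :: behead s')) splice_head def_s !(last_cat, last_cons).
Qed.

Lemma splice_uniq : uniq s'.
Proof.
have [_ Us _ _ _] := adm.
have sub : subseq (u ++ c :: d :: w) (x :: p).
  by rewrite def_s cat_subseq //= eqxx suffix_subseq.
have -> : s' = (u ++ [:: c]) ++ m ++ d :: w by rewrite /s' -catA.
rewrite uniq_catCA cat_uniq m_uniq -catA /=.
rewrite (subseq_uniq sub Us) andbT has_sym; move: m_fresh; rewrite disjoint_has.
by apply: contra; apply: sub_has => y; apply: mem_subseq.
Qed.

Lemma splice_out b : b \in u ++ w -> q' b = q b.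
Proof.
move: splice_uniq; rewrite splice_bridge uniq_catCA cat_uniq.
case/and3P=> _ /hasPn uw_bridge _ /uw_bridge b_bridge.
rewrite /q' /reroute (negbTE b_bridge); case: eqP => // bz.
by move: b_bridge; rewrite bz z_bridge.
Qed.

Lemma splice_lighter : weight s' q' < weight (x :: p) q.
Proof.
have Ubridge : uniq bridge.
  by move: splice_uniq; rewrite splice_bridge !cat_uniq => /and3P[_ _ /andP[]].
have -> : x :: p = u ++ (c :: rcons v d) ++ w by rewrite def_s /= cat_rcons.
rewrite splice_bridge !weight_cat weight_reroute //.
rewrite (eq_in_weight (s := u) (q := q)) => [|b bu]; last by rewrite splice_out // mem_cat bu.
rewrite (eq_in_weight (s := w) (q := q)) => [|b bw]; last by rewrite splice_out // mem_cat bw orbT.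
by have := weight_ends c v d q; rewrite /bridge /= size_rcons; lia.
Qed.

Lemma splice_admissible : admissible E K x (behead s') q'.
Proof.
have [path_s _ xK lastK ok_s] := adm.
split=> //.
- rewrite -[path _ x _]/(sorted (adj E) (x :: behead s')) splice_head.
  rewrite /s' sorted_cat_cons.
  have : sorted (adj E) (x :: p) by [].
  rewrite def_s sorted_cat_cons.
  case/andP=> -> /=; rewrite cat_path -cat_rcons cat_path last_rcons bridge_path /=.
  by case/andP=> _ /andP[_ ->].
- by rewrite splice_head splice_uniq.
- by rewrite splice_last.
move=> a b e; rewrite splice_head /s' mem_triples_cat => /or3P[abe|abe|].
- rewrite splice_out ?mem_cat ?(triples_mid_rcons abe) //; apply: ok_s.
  by rewrite def_s -cat_rcons triples_catl.
- case/and3P: abe => u0 _ /eqP[-> -> ->].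
  have -> : head c (m ++ d :: w) = head d m by case: (m).
  exact: junction_c.
rewrite -cat_cons mem_triples_cat => /or3P[|/and3P[_ w0 /eqP[-> -> ->]]|abe].
- exact: bridge_ok.
- exact: junction_d.
rewrite splice_out ?mem_cat ?(triples_mid abe) ?orbT //; apply: ok_s.
by rewrite def_s -cat_cons catA triples_catr.
Qed.

Lemma improvable_splice : improvable E K x p q.
Proof.
exists (behead s'), q'; split.
- exact: splice_admissible.
- exact: splice_last.
- by rewrite splice_head splice_lighter.
Qed.

End Splice.

Section Improvements.
Variables (T : finType) (E : rel T) (K : {set T}).
Hypothesis dag : is_dag E.
Variables (x : T) (p : seq T) (q : T -> seq T).
Hypothesis adm : admissible E K x p q.

Lemma improvable_shortcut c r1 z r2 :
  c \in x :: p -> dpath_to_K E K c (q c) -> q c = r1 ++ z :: r2 -> z \in x :: p ->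
  [disjoint r1 & x :: p] -> improvable E K x p q.
Proof.
move=> cs cq qc zs r1_fresh; rewrite qc in cq.
have [czs /andP[cK _] zr2] := dpath_to_K_cat cq.
have := dpath_uniq dag czs; rewrite cons_uniq => /andP[c_r1z r1z_uniq].
have cz : c != z by apply: contraNneq c_r1z => ->; rewrite mem_rcons mem_head.
have r1_uniq : uniq r1 by move: r1z_uniq; rewrite rcons_uniq => /andP[].
have [_ _ _ _ ok_s] := adm.
have light : size r1 + size r2 < size (q c) + size (q z).
  by rewrite qc size_cat /= addnS addSn ltnS leq_addr.
case: (split_two cs zs cz) => -[u [v [w def_s]]].
- apply: (improvable_splice (m := r1) (z := z) (r := r2) adm def_s) => //.
  + exact: path_adj.
  + by rewrite in_cons mem_rcons mem_head orbT.
  + by move=> _; apply: triple_ok_chain (path_rcons_head czs) cK.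
  + move=> w0; have uv0 : u ++ c :: v != [::] by case: (u).
    have := triples_at z uv0 w0; rewrite -catA /= -def_s => /ok_s old_ok.
    rewrite reroute_at; apply: triple_ok_redirect old_ok _ zr2.
    by move: czs; rewrite rcons_path => /andP[].
  + by move=> a b e; apply: triple_ok_dpath cq.
- apply: (improvable_splice (m := rev r1) (z := z) (r := r2) adm def_s) => //.
  + exact: path_adj_rev.
  + by rewrite rev_uniq.
  + by rewrite (eq_disjoint (mem_rev r1)).
  + exact: mem_head.
  + move=> u0; rewrite reroute_at head_rev triple_ok_sym.
    have : (last z u, z, head z (v ++ c :: w)) \in triples (x :: p).
      by rewrite def_s; apply: triples_at => //; case: (v).
    move=> /ok_s; rewrite triple_ok_sym => /triple_ok_redirect; apply=> //.
    by move: czs; rewrite rcons_path => /andP[].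
  + by move=> _; rewrite last_rev triple_ok_sym; apply: triple_ok_chain (path_rcons_head czs) cK.
  + by move=> a b e; apply: triple_ok_dpath_rev cq.
  + by rewrite size_rev [size (q z) + _]addnC.
Qed.

Lemma improvable_meet u v w c c' r1 z r2 r1' r2' :
  x :: p = u ++ c :: v ++ c' :: w ->
  dpath_to_K E K c (q c) -> dpath_to_K E K c' (q c') ->
  q c = r1 ++ z :: r2 -> q c' = r1' ++ z :: r2' -> [disjoint r1 & q c'] ->
  [disjoint q c & x :: p] -> [disjoint q c' & x :: p] -> improvable E K x p q.
Proof.
move=> def_s cq c'q qc qc' r1_c' c_fresh c'_fresh.
have light : size (r1 ++ z :: rev r1') + size r2 < size (q c) + size (q c').
  by rewrite qc qc' !size_cat /= size_rev; lia.
rewrite qc in cq c_fresh; rewrite qc' in c'q c'_fresh r1_c'.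
have [czs /andP[cK _] zr2] := dpath_to_K_cat cq.
have [c'zs /andP[c'K _] _] := dpath_to_K_cat c'q.
have := dpath_uniq dag czs; rewrite cons_uniq rcons_uniq => /and3P[_ zr1 r1_uniq].
have := dpath_uniq dag c'zs; rewrite cons_uniq rcons_uniq => /and3P[_ zr1' r1'_uniq].
move: c_fresh; rewrite disjoint_cat disjoint_cons => /and3P[r1_fresh z_fresh _].
move: c'_fresh; rewrite disjoint_cat => /andP[r1'_fresh _].
have r1_r1' : ~~ has (mem r1) r1'.
  by move: r1_c'; rewrite disjoint_sym disjoint_has has_cat negb_or => /andP[].
have head_bridge : head z (rcons (rev r1') c') = last c' r1'.
  by case/lastP: (r1') => [|r y]; rewrite ?rev_rcons ?last_rcons.
apply: (improvable_splice (m := r1 ++ z :: rev r1') (z := z) (r := r2) adm def_s) => //.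
- by rewrite rcons_cat -cat_rcons cat_path last_rcons (path_adj czs) (path_adj_rev c'zs).
- by rewrite cat_uniq r1_uniq /= has_rev negb_or zr1 r1_r1' mem_rev zr1' rev_uniq.
- by rewrite disjoint_cat disjoint_cons (eq_disjoint (mem_rev r1')) r1_fresh z_fresh.
- by rewrite in_cons mem_rcons in_cons mem_cat in_cons eqxx !orbT.
- have -> : head c' (r1 ++ z :: rev r1') = head z r1 by case: (r1).
  by move=> _; apply: triple_ok_chain (path_rcons_head czs) cK.
- move=> _; rewrite last_cat /= last_rev triple_ok_sym.
  exact: triple_ok_chain (path_rcons_head c'zs) c'K.
- move=> a b e; rewrite rcons_cat -cat_cons mem_triples_cat.
  case/or3P=> [|/and3P[_ _ /eqP[-> -> ->]]|]; last exact: triple_ok_dpath_rev c'q.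
    exact: triple_ok_dpath cq.
  rewrite reroute_at head_bridge; apply: triple_ok_collider zr2.
    by move: czs; rewrite rcons_path => /andP[].
  by move: c'zs; rewrite rcons_path => /andP[].
Qed.

Lemma improvable_meet_colliders u v w c c' :
  x :: p = u ++ c :: v ++ c' :: w -> collider E (x :: p) c -> collider E (x :: p) c' ->
  ~~ [disjoint q c & q c'] -> [disjoint q c & x :: p] -> [disjoint q c' & x :: p] ->
  improvable E K x p q.
Proof.
move=> def_s cc cc' + c_fresh c'_fresh.
rewrite disjoint_has negbK => /has_split[r1 [z [r2 [qc zc' r1_c']]]].
have [r1' [r2' qc']] := mem_split zc'.
apply: improvable_meet def_s (admissible_collider adm cc) (admissible_collider adm cc')
       qc qc' _ c_fresh c'_fresh.
by rewrite disjoint_has.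
Qed.

Lemma admissible_improvable : disjoint_witnesses E (x :: p) q \/ improvable E K x p q.
Proof.
set s := x :: p.
case: (boolP [exists c, collider E s c && ~~ [disjoint q c & s]]).
  case/existsP=> c /andP[cc]; rewrite disjoint_has negbK.
  case/has_split=> r1 [z [r2 [qc zs r1_s]]]; right.
  apply: improvable_shortcut (collider_mem cc) (admissible_collider adm cc) qc zs _.
  by rewrite disjoint_has.
move/existsPn=> no_hit; have {}no_hit c : collider E s c -> [disjoint q c & s].
  by move=> cc; move: (no_hit c); rewrite cc negbK.
case: (boolP [exists c, exists c',
                [&& collider E s c, collider E s c', c != c' & ~~ [disjoint q c & q c']]]).
  case/existsP=> c /existsP[c' /and4P[cc cc' cc'_neq meet]]; right.
  case: (split_two (collider_mem cc) (collider_mem cc') cc'_neq) => -[u [v [w def_s]]].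
    exact: improvable_meet_colliders def_s cc cc' meet (no_hit c cc) (no_hit c' cc').
  rewrite disjoint_sym in meet.
  exact: improvable_meet_colliders def_s cc' cc meet (no_hit c' cc') (no_hit c cc).
move/existsPn=> no_meet; left; split=> // c c' cc cc' cc'_neq.
rewrite disjoint_cons in_cons negb_or cc'_neq (disjointFl (no_hit c' cc') (collider_mem cc)) /=.
rewrite disjoint_sym disjoint_cons (disjointFl (no_hit c cc) (collider_mem cc')) disjoint_sym /=.
by have /existsPn/(_ c') := no_meet c; rewrite cc cc' cc'_neq negbK.
Qed.

End Improvements.

Lemma admissible_disjoint_witnesses (T : finType) (E : rel T) (K : {set T}) x p q :
  is_dag E -> admissible E K x p q -> exists p' q',
    [/\ admissible E K x p' q', last x p' = last x p & disjoint_witnesses E (x :: p') q'].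
Proof.
move=> dag; have [n] := ubnP (weight (x :: p) q); elim: n p q => // n IHn p q lt_pn adm.
case: (admissible_improvable dag adm) => [|[p' [q' [adm' <- lt_p'p]]]]; first by exists p, q.
exact: IHn p' q' (leq_trans lt_p'p lt_pn) adm'.
Qed.

Lemma d_connecting_path (T : finType) (E : rel T) (K : {set T}) x y :
  ~ d_separates E K x y -> exists p,
    [/\ is_gpath E x p y, forall k, noncollider E (x :: p) k -> k \notin K &
        forall c, collider E (x :: p) c -> exists2 z, z \in K & connect E c z].
Proof.
move=> not_sep; apply: NNPP => no_path; apply: not_sep => p xpy.
apply: NNPP => no_blocker; apply: no_path; exists p; split=> // [k nck|c cc].
  by apply/negP=> kK; apply: no_blocker; exists k; left; rewrite nck kK.
apply: NNPP => no_z; apply: no_blocker; exists c; right; split=> // [|z zK].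
  by apply/negP=> cK; apply: no_z; exists c.
by apply/negP=> cz; apply: no_z; exists z.
Qed.

Lemma collider_witnesses (T : finType) (E : rel T) (K : {set T}) s :
  (forall c, collider E s c -> exists2 z, z \in K & connect E c z) ->
  exists q, forall c, collider E s c -> dpath_to_K E K c (q c).
Proof.
move=> col_K; have witness c : exists l, collider E s c ==> dpath_to_K E K c l.
  case: (boolP (collider E s c)) => [/col_K[z zK cz]|_]; last by exists [::].
  by have [l cl] := exists_dpath_to_K cz zK; exists l; rewrite cl.
by exists (fun c => xchoose (witness c)) => c; apply/implyP/(xchooseP (witness c)).
Qed.

Theorem lemma6p2 (T : finType) (E : rel T) (x y : T) (K : {set T}) :
  is_dag E -> ~ d_separates E K x y ->
  exists p : seq T,
    [/\ is_gpath E x p y,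
        (* (i) *)
        (forall k, noncollider E (x :: p) k -> k \notin K) &
        exists q : T -> seq T,
          (* (ii) and (iii): for each collider c, c :: q c is a directed path
             from c to a node of K, meeting x :: p only at c *)
          (forall c, collider E (x :: p) c ->
             [/\ is_dpath E c (q c), last c (q c) \in K &
                 forall z, z \in q c -> z \notin x :: p]) /\
          (* (iv) pairwise node-disjoint *)
          (forall c c', collider E (x :: p) c -> collider E (x :: p) c' -> c != c' ->
             forall z, z \in c :: q c -> z \notin c' :: q c')].
Proof.
move=> dag /d_connecting_path[p0 [/and3P[xp0 Up0 /eqP last_p0] nc_K /collider_witnesses[q0 q0_ok]]].
have [p [q [adm last_p [hit meet]]]] :=
  admissible_disjoint_witnesses dag (admissibleI xp0 Up0 nc_K q0_ok).
have [xp Up _ _ _] := adm.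
exists p; split.
- by rewrite /is_gpath xp Up last_p last_p0 eqxx.
- by move=> k; apply: admissible_noncollider adm.
exists q; split=> [c cc | c c' cc cc' neq_cc' z zc].
  have /and3P[cq lastK _] := admissible_collider adm cc.
  split=> // [|z zq]; first by rewrite /is_dpath cq (dpath_uniq dag cq).
  by rewrite (disjointFr (hit c cc) zq).
by rewrite (disjointFr (meet c c' cc cc' neq_cc') zc).
Qed.
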